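(* Let $k\ge 2$ and $G=\Theta(2,2,2k)$ with end vertices $u$ and $v$. Let $m\ge 3$ and let $L$ be an $m$-assignment for $G$ with $L(u)=L(v)$. Then $P(G,L)\ge P(G,m)$.
   Context: $\Theta(l_1,l_2,l_3)$ denotes two end vertices joined by three internally disjoint paths of lengths $l_1,l_2,l_3$. An $m$-assignment $L$ assigns to each vertex $w$ a set $L(w)$ of $m$ colors; $P(G,L)$ is the number of proper colorings $f$ of $G$ with $f(w)\in L(w)$ for all $w$. $P(G,m)$ is the chromatic polynomial of $G$. *)

From mathcomp Require Import all_boot.
From mathcomp Require Import zify.
Set Implicit Arguments. Unset Strict Implicit. Unset Printing Implicit Defensive.

(* Theta graph Theta(l1,l2,l3), lengths l_i >= 1.
   Vertices: 'I_(l1+l2+l3-1) = 2 ends + (l1-1)+(l2-1)+(l3-1) internal vertices.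
   End vertices: u = 0, v = 1.
   Path i (length l) with internal-vertex offset off visits
   0, off, off+1, ..., off+l-2, 1. *)
Definition path_vtx (off l j : nat) : nat :=
  if j == 0 then 0 else if j == l then 1 else off + j - 1.

Definition path_edge (off l x y : nat) : bool :=
  has (fun j => ((x == path_vtx off l j) && (y == path_vtx off l j.+1))
             || ((y == path_vtx off l j) && (x == path_vtx off l j.+1)))
      (iota 0 l).

Definition theta_adj_nat (l1 l2 l3 x y : nat) : bool :=
  [|| path_edge 2 l1 x y,
      path_edge (2 + (l1 - 1)) l2 x y
    | path_edge (2 + (l1 - 1) + (l2 - 1)) l3 x y].

Definition theta_vertex (l1 l2 l3 : nat) := 'I_(l1 + l2 + l3 - 1).

Definition theta_adj (l1 l2 l3 : nat) : rel (theta_vertex l1 l2 l3) :=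
  fun x y => theta_adj_nat l1 l2 l3 (val x) (val y).

Definition proper (V C : finType) (adj : rel V) (f : {ffun V -> C}) : bool :=
  [forall x, forall y, adj x y ==> (f x != f y)].

Definition P_list (V C : finType) (adj : rel V) (L : V -> {set C}) : nat :=
  #|[set f : {ffun V -> C} | [forall w, f w \in L w] && proper adj f]|.

Definition P_chrom (V : finType) (adj : rel V) (m : nat) : nat :=
  #|[set f : {ffun V -> 'I_m} | proper adj f]|.

Lemma theta_end_lt (l1 l2 l3 i : nat) :
  i < 2 -> 1 < l1 -> 0 < l2 -> i < l1 + l2 + l3 - 1.
Proof.
move=> hi h1 h2; lia.
Qed.

Definition theta_u (l1 l2 l3 : nat) (h1 : 1 < l1) (h2 : 0 < l2) :
  theta_vertex l1 l2 l3 := Ordinal (@theta_end_lt l1 l2 l3 0 isT h1 h2).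
Definition theta_v (l1 l2 l3 : nat) (h1 : 1 < l1) (h2 : 0 < l2) :
  theta_vertex l1 l2 l3 := Ordinal (@theta_end_lt l1 l2 l3 1 isT h1 h2).

Arguments theta_adj : clear implicits.
Arguments theta_u : clear implicits.
Arguments theta_v : clear implicits.

(* Fix the colours a of u and b of v.  The three u-v paths are then coloured
   independently: if x, y are the middle vertices of the two paths of length 2 and W
   is the sequence of lists on the 2k-1 interior vertices of the long path, then
     P(G,L) = sum_(a in L(u), b in L(v)) N(a,[L x],b) N(a,[L y],b) N(a,W,b),
   where N(a,W,b) counts the list colourings of the interior of a path with end
   colours a and b.  For a, b in A := L(u) = L(v) the vertex x has at least
   m-2+[a=b] admissible colours, with equality when L x = A.  As
   (m-2+[a=b])^2 = (m-2)^2 + (2m-3)[a=b], this gives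
     P(G,L) >= (m-2)^2 T + (2m-3) S,
   where T = sum_(a,b in A) N(a,W,b) and S = sum_(a in A) N(a,W,a) counts colourings
   of a cycle.  For constant lists this is an equality with T = m(m-1)^(2k) and
   S = (m-1)^(2k) + (m-1), which is P(G,m); if every list of W is A, T and S take
   these values.  Otherwise a colour outside A in the first list of W that differs
   from A gives T >= (m-1)^(2k-1) (m(m-1)+1) and S >= (m-1)^(2k), and the gain
   (m-2)^2 (m-1)^(2k-1) in the first term beats the loss (2m-3)(m-1) in the second
   because 2k-1 >= 3. *)

From Pilot Require Import Defs.
From mathcomp Require Import all_boot.
From mathcomp Require Import zify.
Set Implicit Arguments. Unset Strict Implicit. Unset Printing Implicit Defensive.

(** * Counting tuples *)

Section FinsetCard.
Variable T : finType.

Lemma sum_neq (B : {set T}) b : \sum_(c in B) (c != b) = #|B :\ b|.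
Proof.
rewrite -sum1_card [RHS]big_mkcond [LHS]big_mkcond /=.
by apply: eq_bigr => c _; rewrite !inE andbC; case: (c \in B).
Qed.

Lemma cardsD1_geq (X : {set T}) a : #|X| - 1 <= #|X :\ a|.
Proof. by have := cardsD1 a X; case: (a \in X) => /= ->; lia. Qed.

Lemma card_mul_leq_sum (X : {set T}) K (F : T -> nat) :
  {in X, forall c, K <= F c} -> #|X| * K <= \sum_(c in X) F c.
Proof. by move=> leKF; rewrite -sum_nat_const; apply: leq_sum. Qed.

Lemma exists_notin (A X : {set T}) :
  #|A| = #|X| -> A != X -> exists2 a, a \in A & a \notin X.
Proof.
move=> eqAX neqAX; apply/subsetPn; apply: contra neqAX => sAX.
by rewrite eqEcard sAX eqAX leqnn.
Qed.

End FinsetCard.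

Section BigTupleCons.
Variables (R : Type) (idx : R) (op : Monoid.com_law idx) (T : finType).

Lemma big_tuple_cons n (F : n.+1.-tuple T -> R) :
  \big[op/idx]_(t : n.+1.-tuple T) F t =
  \big[op/idx]_(x : T) \big[op/idx]_(t : n.-tuple T) F [tuple of x :: t].
Proof.
rewrite pair_big (reindex (fun p : T * n.-tuple T => [tuple of p.1 :: p.2])) //.
exists (fun t => (thead t, [tuple of behead t])) => [[x t] _ | t _].
  by congr (_, _); apply: val_inj.
by rewrite [RHS]tuple_eta.
Qed.

End BigTupleCons.

Section CountTuples.
Variable T : finType.

Fixpoint count_tuples n (P : pred (seq T)) : nat :=
  if n is n'.+1 then \sum_(x : T) count_tuples n' (fun s => P (x :: s)) else P [::].

Lemma count_tuplesE n (P : pred (seq T)) :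
  count_tuples n P = \sum_(t : n.-tuple T) P t.
Proof.
elim: n P => [|n IH] P /=; last by rewrite big_tuple_cons; apply: eq_bigr => x _.
by rewrite (big_pred1 [tuple]) // => t; apply/esym/eqP; exact: tuple0.
Qed.

Lemma card_count_tuples n (P : pred (seq T)) :
  #|[set t : n.-tuple T | P t]| = count_tuples n P.
Proof.
rewrite -sum1dep_card count_tuplesE big_mkcond.
by apply: eq_bigr => t _; case: (P t).
Qed.

Lemma card_ffun_codom n (P : pred (seq T)) :
  #|[set f : {ffun 'I_n -> T} | P (codom f)]| = count_tuples n P.
Proof.
rewrite -card_count_tuples -(card_imset _ (can_inj (@tuple_of_finfunK T n))).
have codom_tuple (f : {ffun 'I_n -> T}) : codom f = tuple_of_finfun f.
  by rewrite codomE.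
apply: eq_card => t; rewrite inE; apply/imsetP/idP => [[f]|Pt].
  by rewrite inE codom_tuple => Pf ->.
by exists (finfun_of_tuple t); rewrite ?inE ?codom_tuple finfun_of_tupleK.
Qed.

Lemma eq_count_tuples n (P Q : pred (seq T)) :
  (forall s, size s = n -> P s = Q s) -> count_tuples n P = count_tuples n Q.
Proof.
elim: n P Q => [|n IH] P Q /= eqPQ; first by rewrite eqPQ.
by apply: eq_bigr => x _; apply: IH => s size_s; apply: eqPQ; rewrite /= size_s.
Qed.

Lemma count_tuples_andl n (b : bool) (P : pred (seq T)) :
  count_tuples n (fun s => b && P s) = b * count_tuples n P.
Proof.
elim: n P => [|n IH] P /=; first by rewrite mulnb.
by rewrite big_distrr; apply: eq_bigr => x _; rewrite IH.
Qed.

Lemma count_tuples_cat p q (P Q : pred (seq T)) :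
  count_tuples (p + q) (fun s => P (take p s) && Q (drop p s)) =
  count_tuples p P * count_tuples q Q.
Proof.
elim: p P => [|p IH] P.
  rewrite add0n -count_tuples_andl; apply: eq_count_tuples => s _.
  by rewrite take0 drop0.
by rewrite addSn /= big_distrl; apply: eq_bigr => x _; exact: IH.
Qed.

End CountTuples.

Lemma nth_codom_ord n (T : Type) (x0 : T) (F : 'I_n -> T) (i : 'I_n) :
  nth x0 (codom F) i = F i.
Proof. by rewrite codomE (nth_map i) ?nth_ord_enum ?size_enum_ord. Qed.

(** * List colourings of paths *)

Definition proper_path (T : eqType) (a : T) w b :=
  path (fun c d => c != d) a (rcons w b).

Section PathColourings.
Variable C : finType.

Definition from_lists (w : seq C) (Ls : seq {set C}) : bool :=
  all2 (fun c (X : {set C}) => c \in X) w Ls.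

Lemma from_lists_cat w Ls1 Ls2 : from_lists w (Ls1 ++ Ls2) =
  from_lists (take (size Ls1) w) Ls1 && from_lists (drop (size Ls1) w) Ls2.
Proof. by elim: Ls1 w => [|X Ls1 IH] [|c w] //=; rewrite ?take0 ?drop0 // IH andbA. Qed.

Lemma forall_in_lists (V : finType) (f : {ffun V -> C}) (L : V -> {set C}) :
  [forall x, f x \in L x] = from_lists (codom f) (codom L).
Proof.
rewrite /from_lists !codomE.
have -> : forall s, all2 (fun c (X : {set C}) => c \in X) (map f s) (map L s) =
    all (fun x => f x \in L x) s by elim=> //= x s ->.
by apply/forallP/allP => [inL x _ | inL x]; [exact: inL | apply: inL; rewrite mem_enum].
Qed.

(* Proper colourings c_1, ..., c_r of the interior of the path a, c_1, ..., c_r, b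
   with c_i in the i-th list of [Ls]. *)
Fixpoint npath (a : C) (Ls : seq {set C}) (b : C) : nat :=
  if Ls is X :: Ls' then \sum_(c in X :\ a) npath c Ls' b else a != b.

Definition ncycle (A : {set C}) (Ls : seq {set C}) : nat := \sum_(a in A) npath a Ls a.

Lemma npath_count a Ls b : npath a Ls b =
  count_tuples (size Ls) (fun w => from_lists w Ls && proper_path a w b).
Proof.
elim: Ls a => [|X Ls IH] a /=; first by rewrite /proper_path /= andbT.
rewrite big_mkcond; apply: eq_bigr => c _.
rewrite (eq_count_tuples (Q := fun w =>
  (c \in X :\ a) && (from_lists w Ls && proper_path c w b))) => [|w _].
  by rewrite count_tuples_andl -IH; case: (c \in X :\ a); rewrite ?mul1n.
by rewrite /proper_path /= !inE eq_sym; case: (c \in X); case: (c != a); rewrite ?andbF.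
Qed.

Lemma count_parallel_paths a b W1 W2 W3 :
  count_tuples (size W1 + (size W2 + size W3)) (fun w =>
    from_lists w (W1 ++ W2 ++ W3) &&
    [&& proper_path a (take (size W1) w) b,
        proper_path a (take (size W2) (drop (size W1) w)) b &
        proper_path a (drop (size W2) (drop (size W1) w)) b]) =
  npath a W1 b * npath a W2 b * npath a W3 b.
Proof.
rewrite !npath_count -mulnA -!count_tuples_cat; apply: eq_count_tuples => w _.
by rewrite !from_lists_cat -!andbA; do !bool_congr.
Qed.

Lemma npath1 a X b : npath a [:: X] b = #|X :\ a :\ b|.
Proof. exact: sum_neq. Qed.

Lemma npath_cat a Ls1 X Ls2 b :
  npath a (Ls1 ++ X :: Ls2) b = \sum_(c in X) npath a Ls1 c * npath c Ls2 b.
Proof.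
elim: Ls1 a => [|Y Ls1 IH] a /=.
  rewrite big_mkcond [RHS]big_mkcond; apply: eq_bigr => c _.
  by rewrite !inE eq_sym; case: (a != c); case: (c \in X); rewrite ?mul1n.
under eq_bigr do rewrite IH.
by rewrite exchange_big; apply: eq_bigr => c _; rewrite big_distrl.
Qed.

Lemma npath_rev a Ls b : npath a Ls b = npath b (rev Ls) a.
Proof.
elim/last_ind: Ls a b => [|Ls X IH] a b /=; first by rewrite eq_sym.
rewrite -cats1 npath_cat rev_cat /= big_mkcond [RHS]big_mkcond.
apply: eq_bigr => c _; rewrite IH !inE.
by case: (c != b); case: (c \in X); rewrite ?muln1 ?muln0.
Qed.

Lemma sum2_npath_cat (A B : {set C}) Ls1 X Ls2 :
  \sum_(a in A) \sum_(b in B) npath a (Ls1 ++ X :: Ls2) b =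
  \sum_(c in X) (\sum_(a in A) npath a Ls1 c) * (\sum_(b in B) npath c Ls2 b).
Proof.
under eq_bigr do under eq_bigr do rewrite npath_cat.
under eq_bigr do rewrite exchange_big /=; rewrite exchange_big /=.
by apply: eq_bigr => c _; rewrite big_distrl; apply: eq_bigr => a _; rewrite big_distrr.
Qed.

Lemma ncycle_rot A Ls1 X Ls2 :
  ncycle A (Ls1 ++ X :: Ls2) = ncycle X (Ls2 ++ A :: Ls1).
Proof.
rewrite /ncycle; under eq_bigr do rewrite npath_cat.
under [RHS]eq_bigr do rewrite npath_cat.
by rewrite exchange_big; apply: eq_bigr => x _; apply: eq_bigr => a _; rewrite mulnC.
Qed.

Lemma ncycle_cons_self A Ls :
  ncycle A (A :: Ls) + ncycle A Ls = \sum_(a in A) \sum_(b in A) npath a Ls b.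
Proof.
rewrite /ncycle -big_split exchange_big /=; apply: eq_bigr => b bA.
by rewrite addnC (big_setD1 b bA).
Qed.

Section Bounds.
Variable m : nat.
Hypothesis m_gt1 : 1 < m.
Local Notation sized := (all (fun X : {set C} => #|X| == m)).

Lemma sum_npath_ge (B : {set C}) a Ls :
  sized Ls -> (m - 1) ^ size Ls * (#|B| - 1) <= \sum_(b in B) npath a Ls b.
Proof.
elim: Ls a => [|X Ls IH] a /=.
  by rewrite mul1n; under eq_bigr do rewrite eq_sym; rewrite sum_neq cardsD1_geq.
case/andP => /eqP cardX sizedLs; rewrite exchange_big /= expnS -mulnA.
apply: leq_trans (card_mul_leq_sum _) => [|c _]; last exact: IH.
by rewrite leq_mul2r -cardX cardsD1_geq orbT.
Qed.

Lemma npath_ge a Ls b :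
  sized Ls -> 0 < size Ls -> (m - 1) ^ (size Ls).-1 * (m - 2) <= npath a Ls b.
Proof.
case: Ls => [//|X Ls] /= /andP[/eqP cardX sizedLs] _.
under eq_bigr do rewrite npath_rev.
have := @sum_npath_ge (X :\ a) b (rev Ls); rewrite all_rev size_rev.
move=> /(_ sizedLs); apply: leq_trans; rewrite leq_mul2l; apply/orP; right.
by apply: leq_trans (leq_sub2r 1 (cardsD1_geq X a)); rewrite cardX -subnDA.
Qed.

Lemma npath1_ge a (X : {set C}) b :
  #|X| = m -> m - 2 + (a == b) <= npath a [:: X] b.
Proof.
move=> cardX; rewrite npath1.
have := cardsD1 b (X :\ a); have := cardsD1 a X; rewrite !inE.
case: (eqVneq a b) => [<-|ab]; rewrite ?eqxx ?(eq_sym b) ?ab ?(negbTE ab) /=.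
  by case: (a \in X); lia.
by case: (a \in X); case: (b \in X); lia.
Qed.

Lemma npath1_eq a (X : {set C}) b :
  #|X| = m -> a \in X -> b \in X -> npath a [:: X] b = m - 2 + (a == b).
Proof.
move=> cardX aX bX; rewrite npath1.
have := cardsD1 b (X :\ a); have := cardsD1 a X; rewrite !inE aX bX.
by case: (eqVneq a b) => [<-|ab]; rewrite ?eqxx ?(eq_sym b) ?ab ?(negbTE ab) /=; lia.
Qed.

Lemma sum_npath_const (A : {set C}) a Ls : #|A| = m -> all (pred1 A) Ls ->
  \sum_(b in A) npath a Ls b = (m - 1) ^ size Ls * (m - (a \in A)).
Proof.
move=> cardA; have cardAD1 c : #|A :\ c| = m - (c \in A).
  by rewrite -cardA (cardsD1 c A) addKn.
elim: Ls a => [|X Ls IH] a /=.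
  by under eq_bigr do rewrite eq_sym; rewrite sum_neq mul1n cardAD1.
case/andP => /eqP -> constLs; rewrite exchange_big /=.
under eq_bigr => c /setD1P[_ cA] do rewrite IH // cA.
by rewrite sum_nat_const cardAD1 expnS mulnC; congr (_ * _); rewrite mulnC.
Qed.

Lemma sum2_npath_const (A : {set C}) Ls : #|A| = m -> all (pred1 A) Ls ->
  \sum_(a in A) \sum_(b in A) npath a Ls b = m * (m - 1) ^ (size Ls).+1.
Proof.
move=> cardA constLs; under eq_bigr => a aA do rewrite sum_npath_const // aA.
by rewrite sum_nat_const cardA expnSr mulnC.
Qed.

Lemma ncycle_const (A : {set C}) Ls : #|A| = m -> all (pred1 A) Ls ->
  ncycle A Ls + (m - 1) * ~~ odd (size Ls) =
  (m - 1) ^ (size Ls).+1 + (m - 1) * odd (size Ls).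
Proof.
move=> cardA; elim: Ls => [|X Ls IH] /=.
  move=> _; rewrite /ncycle big1 => [|a _]; last by rewrite /= eqxx.
  by rewrite add0n muln1 muln0 addn0 expn1.
case/andP => /eqP -> constLs; have := ncycle_cons_self A Ls.
rewrite sum2_npath_const // (negbK (odd _)); move: (IH constLs).
have [M ->] : exists M, m = M.+1 by exists m.-1; lia.
rewrite subSS subn0 !expnS; case: (odd (size Ls)) => /=; nia.
Qed.

Lemma sum2_npath_nonconst (A : {set C}) Ls :
  #|A| = m -> sized Ls -> ~~ all (pred1 A) Ls ->
  (m - 1) ^ size Ls * (m * (m - 1) + 1) <= \sum_(a in A) \sum_(b in A) npath a Ls b.
Proof.
move=> cardA + nonconst; rewrite -has_predC in nonconst.
case/split_find: nonconst => X pre post /= neqXA.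
rewrite has_predC negbK cat_rcons all_cat /= sum2_npath_cat.
move=> constpre /and3P[_ /eqP cardX sizedpost].
have rowE d : \sum_(a in A) npath a pre d = (m - 1) ^ size pre * (m - (d \in A)).
  by under eq_bigr do rewrite npath_rev; rewrite sum_npath_const ?all_rev ?size_rev.
have colE d : (m - 1) ^ (size post).+1 <= \sum_(b in A) npath d post b.
  by have := sum_npath_ge A d sizedpost; rewrite cardA -expnSr.
apply: leq_trans
  (_ : \sum_(d in X) (m - 1) ^ size (pre ++ X :: post) * (m - (d \in A)) <= _).
  rewrite -big_distrr leq_mul2l; apply/orP; right.
  have [d0 d0X d0A] := exists_notin (etrans cardX (esym cardA)) neqXA.
  rewrite (big_setD1 d0 d0X) (negbTE d0A) subn0.
  apply: leq_trans (_ : m + (m - 1) * (m - 1) <= _); first nia.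
  rewrite leq_add2l; apply: leq_trans (card_mul_leq_sum (K := m - 1) _) => [|d _].
    by rewrite leq_mul2r -cardX cardsD1_geq orbT.
  by rewrite leq_sub2l ?leq_b1.
apply: leq_sum => d _.
by rewrite rowE size_cat expnD mulnAC leq_mul2l colE orbT.
Qed.

Lemma ncycle_cons_ge (A X : {set C}) Q :
  #|A| = m -> #|X| = m -> X != A -> sized Q -> 0 < size Q ->
  (m - 1) ^ (size Q).+2 <= ncycle A (X :: Q).
Proof.
move=> cardA cardX neqXA sizedQ Q_gt0.
have [a0 a0A a0X] : exists2 a0, a0 \in A & a0 \notin X.
  by apply: exists_notin; rewrite 1?eq_sym ?cardA ?cardX.
rewrite /ncycle (big_setD1 a0 a0A) /=.
have term_a0 : (m - 1) ^ size Q * (m - 1) <= \sum_(c in X :\ a0) npath c Q a0.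
  have cardXa0 : #|X :\ a0| = m by rewrite -cardX (cardsD1 a0 X) (negbTE a0X).
  under eq_bigr do rewrite npath_rev.
  have := @sum_npath_ge (X :\ a0) a0 (rev Q).
  by rewrite all_rev size_rev cardXa0; apply.
have terms_rest : (m - 1) * ((m - 1) * ((m - 1) ^ (size Q).-1 * (m - 2))) <=
    \sum_(a in A :\ a0) \sum_(c in X :\ a) npath c Q a.
  have cardAa0 : #|A :\ a0| = m - 1 by rewrite -cardA (cardsD1 a0 A) a0A add1n subn1.
  apply: leq_trans (card_mul_leq_sum _) => [|a _]; first by rewrite cardAa0.
  apply: leq_trans (card_mul_leq_sum _) => [|c _]; last exact: npath_ge.
  by rewrite leq_mul2r -cardX cardsD1_geq orbT.
apply: leq_trans (leq_add term_a0 terms_rest).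
case: (size Q) Q_gt0 => // q _; rewrite /= !expnS.
have [M ->] : exists M, m = M.+2 by exists m.-2; lia.
rewrite !subSS subn0; nia.
Qed.

Lemma ncycle_nonconst (A : {set C}) Ls :
  #|A| = m -> sized Ls -> ~~ all (pred1 A) Ls -> 1 < size Ls ->
  (m - 1) ^ (size Ls).+1 <= ncycle A Ls.
Proof.
move=> cardA + nonconst; rewrite -has_predC in nonconst.
case/split_find: nonconst => X pre post /= neqXA.
rewrite has_predC negbK cat_rcons all_cat /=.
move=> constpre /and3P[sizedpre /eqP cardX sizedpost] size_gt1.
suff [Q [-> sizedQ sizeQ]] : exists Q,
    [/\ ncycle A (pre ++ X :: post) = ncycle A (X :: Q),
        sized Q & (size Q).+1 = size (pre ++ X :: post)].
  by rewrite -sizeQ; apply: ncycle_cons_ge => //; rewrite -ltnS sizeQ.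
case/lastP: pre constpre sizedpre {size_gt1} => [|pre A'] => [_ _|].
  by exists post.
rewrite !all_rcons => /andP[/eqP -> _] /andP[_ sizedpre].
exists (post ++ A :: pre); rewrite cat_rcons ncycle_rot.
split => //; first by rewrite all_cat /= cardA eqxx sizedpost sizedpre.
by rewrite !size_cat /=; lia.
Qed.

(* For a, b in A a middle vertex with list A has exactly m - 2 + [a == b] colours,
   so [wsum A Ls] counts the colourings of Theta(2,2,size Ls + 1) with list A at the
   ends and the two middle vertices and the lists [Ls] on the long path. *)
Definition wsum (A : {set C}) Ls :=
  \sum_(a in A) \sum_(b in A) (m - 2 + (a == b)) ^ 2 * npath a Ls b.

Lemma wsumE (A : {set C}) Ls : wsum A Ls =
  (m - 2) ^ 2 * \sum_(a in A) \sum_(b in A) npath a Ls b + (2 * m - 3) * ncycle A Ls.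
Proof.
rewrite /wsum /ncycle !big_distrr -big_split /=; apply: eq_bigr => a aA.
rewrite (big_setD1 a aA) [in RHS](big_setD1 a aA) /= eqxx.
under eq_bigr => b /setD1P[ba _] do rewrite eq_sym (negbTE ba) addn0.
have sq : (m - 2 + 1) ^ 2 = (m - 2) ^ 2 + (2 * m - 3).
  by rewrite sqrnD exp1n muln1 -addnA; congr (_ + _); lia.
by rewrite -big_distrr /= sq mulnDl mulnDr addnAC.
Qed.

Lemma wsum_le_theta (A X Y : {set C}) Ls : #|X| = m -> #|Y| = m ->
  wsum A Ls <=
  \sum_(a in A) \sum_(b in A) npath a [:: X] b * npath a [:: Y] b * npath a Ls b.
Proof.
move=> cardX cardY; apply: leq_sum => a _; apply: leq_sum => b _.
by rewrite -mulnn leq_mul2r; apply/orP; right; apply: leq_mul; exact: npath1_ge.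
Qed.

Lemma theta_const_wsum (A : {set C}) Ls : #|A| = m ->
  \sum_(a in A) \sum_(b in A) npath a [:: A] b * npath a [:: A] b * npath a Ls b =
  wsum A Ls.
Proof.
move=> cardA; apply: eq_bigr => a aA; apply: eq_bigr => b bA.
by rewrite npath1_eq // mulnn.
Qed.

Lemma wsum_const (A : {set C}) Ls :
  #|A| = m -> all (pred1 A) Ls -> odd (size Ls) ->
  wsum A Ls = (m - 2) ^ 2 * (m * (m - 1) ^ (size Ls).+1)
              + (2 * m - 3) * ((m - 1) ^ (size Ls).+1 + (m - 1)).
Proof.
move=> cardA constLs odd_r; rewrite wsumE sum2_npath_const //.
by have := ncycle_const cardA constLs; rewrite odd_r muln0 addn0 muln1 => ->.
Qed.

End Bounds.

Lemma wsum_ge m (A : {set C}) Ls :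
  2 < m -> #|A| = m -> all (fun X : {set C} => #|X| == m) Ls ->
  odd (size Ls) -> 1 < size Ls ->
  (m - 2) ^ 2 * (m * (m - 1) ^ (size Ls).+1)
    + (2 * m - 3) * ((m - 1) ^ (size Ls).+1 + (m - 1)) <= wsum m A Ls.
Proof.
move=> m_gt2 cardA sizedLs odd_r r_gt1; have m_gt1 := ltnW m_gt2.
have [constLs|nonconst] := boolP (all (pred1 A) Ls); first by rewrite wsum_const.
rewrite wsumE //; apply: leq_trans (leq_add
  (leq_mul (leqnn _) (sum2_npath_nonconst m_gt1 cardA sizedLs nonconst))
  (leq_mul (leqnn _) (ncycle_nonconst m_gt1 cardA sizedLs nonconst r_gt1))).
have key : (2 * m - 3) * (m - 1) <= (m - 2) ^ 2 * (m - 1) ^ size Ls.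
  apply: (@leq_trans ((m - 2) ^ 2 * (m - 1) ^ 3)); last first.
    rewrite leq_mul2l leq_pexp2l ?orbT //; first lia.
    by case: (size Ls) odd_r r_gt1 => [|[|[|r]]].
  rewrite [(m - 1) ^ 3]expnSr mulnA leq_mul2r; apply/orP; right.
  apply: (@leq_trans ((m - 1) ^ 2)); first nia.
  by rewrite leq_pmull // expn_gt0 subn_gt0 m_gt2.
move: key; rewrite [(m - 1) ^ (size Ls).+1]expnS.
move: (m - 1) (2 * m - 3) ((m - 2) ^ 2) ((m - 1) ^ size Ls) => q c a P; lia.
Qed.

End PathColourings.

(** * Colourings of theta graphs *)

Lemma path_map_iota (T : Type) (r : rel T) (h : nat -> T) i l :
  path r (h i) [seq h j | j <- iota i.+1 l] = all (fun j => r (h j) (h j.+1)) (iota i l).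
Proof. by elim: l i => [|l IH] i //=; rewrite IH. Qed.

Section PathEdge.
Variables (T : eqType) (off l : nat).
Local Notation pv := (path_vtx off l).

Lemma path_edge_vtx j : j < l -> path_edge off l (pv j) (pv j.+1).
Proof. by move=> jl; apply/hasP; exists j; rewrite ?mem_iota ?jl ?eqxx. Qed.

Lemma path_vtx_lt N j : j <= l -> 1 < N -> off + l.-1 <= N -> pv j < N.
Proof.
rewrite /path_vtx => jl N_gt1 lN.
by case: eqP => [_|j_neq0]; [lia | case: eqP => [_|j_neql]; lia].
Qed.

Lemma path_edge_lt N x y :
  1 < N -> off + l.-1 <= N -> path_edge off l x y -> (x < N) && (y < N).
Proof.
move=> N_gt1 lN /hasP[j]; rewrite mem_iota add0n => /andP[_ jl].
by case/orP => /andP[/eqP-> /eqP->]; rewrite !path_vtx_lt // ltnW.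
Qed.

Lemma path_edge_neq_all (g : nat -> T) :
  (forall x y, path_edge off l x y -> g x != g y) <->
  all (fun j => g (pv j) != g (pv j.+1)) (iota 0 l).
Proof.
split=> [neq_g | /allP neq_g x y /hasP[j jl]].
  by apply/allP => j; rewrite mem_iota => /andP[_ jl]; apply/neq_g/path_edge_vtx.
by case/orP => /andP[/eqP-> /eqP->]; last rewrite eq_sym; apply: neq_g.
Qed.

Lemma map_path_vtx (g : nat -> T) : 0 < l ->
  [seq g (pv j) | j <- iota 1 l] = rcons [seq g i | i <- iota off l.-1] (g 1).
Proof.
case: l => // k _; rewrite -addn1 iotaD map_cat /= cats1 /path_vtx addn1 eqxx /=.
congr rcons; have -> : iota off k = map (addn off) (iota 0 k) by rewrite -iotaDl addn0.
rewrite (iotaDl 1 0) -!map_comp; apply/eq_in_map => j.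
by rewrite mem_iota add0n /= => jk; rewrite ifF ?addnS ?subn1 //; apply/eqP; lia.
Qed.

Lemma path_edge_proper (s : seq T) x0 : 0 < l -> off + l.-1 <= size s ->
  (forall x y, path_edge off l x y -> nth x0 s x != nth x0 s y) <->
  proper_path (nth x0 s 0) (take l.-1 (drop off s)) (nth x0 s 1).
Proof.
move=> l_gt0 ls; rewrite path_edge_neq_all /proper_path.
rewrite -(map_nth_iota x0) -?(map_path_vtx (nth x0 s)) //; last lia.
by rewrite (path_map_iota _ (fun j => nth x0 s (pv j)) 0).
Qed.

End PathEdge.

Section ThetaColourings.
Variables (C : finType) (l1 l2 l3 : nat).
Hypotheses (l1_gt0 : 0 < l1) (l2_gt0 : 0 < l2) (l3_gt0 : 0 < l3).
Local Notation n := (l1 + l2 + l3 - 1).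

(* [s] lists the colours in the vertex order of [theta_vertex]: u, v, then the
   interiors of the three paths, one after the other. *)
Definition theta_proper (s : seq C) : bool :=
  if s is a :: b :: w then
    [&& proper_path a (take l1.-1 w) b,
        proper_path a (take l2.-1 (drop l1.-1 w)) b &
        proper_path a (drop l2.-1 (drop l1.-1 w)) b]
  else true.

Definition theta_coloured (Ls : seq {set C}) (s : seq C) : bool :=
  from_lists s Ls && theta_proper s.

Lemma theta_adj_lt x y : theta_adj_nat l1 l2 l3 x y -> (x < n) && (y < n).
Proof. by case/or3P => /path_edge_lt; apply; lia. Qed.

Lemma proper_theta (f : {ffun theta_vertex l1 l2 l3 -> C}) :
  Defs.proper (theta_adj l1 l2 l3) f = theta_proper (codom f).
Proof.
have := nth_codom_ord _ f; have : size (codom f) = n by rewrite size_codom card_ord.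
case: (codom f) => [|a [|b w]] /= size_w nth_f; try lia.
set s := [:: a, b & w] in nth_f.
have adjP : reflect (forall x y, theta_adj_nat l1 l2 l3 x y -> nth a s x != nth a s y)
    (Defs.proper (theta_adj l1 l2 l3) f).
  apply: (iffP forallP) => [proper_f x y adj_xy | neq_s x].
    have /andP[xn yn] := theta_adj_lt adj_xy.
    have := implyP (forallP (proper_f (Ordinal xn)) (Ordinal yn)) adj_xy.
    by rewrite -!(nth_f a).
  by apply/forallP => y; apply/implyP; rewrite -!(nth_f a); apply: neq_s.
have pathP off l : 0 < l -> off + l.-1 <= n ->
    (forall x y, path_edge off l x y -> nth a s x != nth a s y) <->
    proper_path a (take l.-1 (drop off s)) b.
  by move=> l_gt0 le_n; apply: path_edge_proper => //; rewrite /= size_w.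
have E1 := pathP 2 l1 l1_gt0 ltac:(lia).
have E2 := pathP (2 + (l1 - 1)) l2 l2_gt0 ltac:(lia).
have E3 := pathP (2 + (l1 - 1) + (l2 - 1)) l3 l3_gt0 ltac:(lia).
have -> : drop l2.-1 (drop l1.-1 w) = take l3.-1 (drop (2 + (l1 - 1) + (l2 - 1)) s).
  by rewrite drop_drop take_oversize ?size_drop /=; first congr drop; lia.
have -> : drop l1.-1 w = drop (2 + (l1 - 1)) s by rewrite subn1.
have -> : take l1.-1 w = take l1.-1 (drop 2 s) by rewrite /s /= drop0.
apply/adjP/and3P => [neq_s | [p1 p2 p3] x y].
  split; [apply: (proj1 E1) | apply: (proj1 E2) | apply: (proj1 E3)] => x y e;
  by apply: neq_s; rewrite /theta_adj_nat e ?orbT.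
by case/or3P; [apply: (proj2 E1 p1) | apply: (proj2 E2 p2) | apply: (proj2 E3 p3)].
Qed.

Lemma P_list_theta (L : theta_vertex l1 l2 l3 -> {set C}) X0 X1 W1 W2 W3 :
  codom L = X0 :: X1 :: W1 ++ W2 ++ W3 -> size W1 = l1.-1 -> size W2 = l2.-1 ->
  P_list (theta_adj l1 l2 l3) L =
  \sum_(a in X0) \sum_(b in X1) npath a W1 b * npath a W2 b * npath a W3 b.
Proof.
move=> codomL sizeW1 sizeW2.
have sizeW3 : size W3 = l3.-1.
  by move: (size_codom L); rewrite codomL card_ord /= !size_cat sizeW1 sizeW2; lia.
rewrite /P_list.
have -> : [set f : {ffun theta_vertex l1 l2 l3 -> C} |
      [forall w, f w \in L w] && Defs.proper (theta_adj l1 l2 l3) f] =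
    [set f : {ffun theta_vertex l1 l2 l3 -> C} | theta_coloured (codom L) (codom f)].
  by apply/setP => f; rewrite !inE forall_in_lists proper_theta.
rewrite card_ffun_codom codomL (_ : n = (size W1 + (size W2 + size W3)).+2); last first.
  by rewrite sizeW1 sizeW2 sizeW3; lia.
have count_ab a b : count_tuples (size W1 + (size W2 + size W3))
    (fun w => theta_coloured [:: X0, X1 & W1 ++ W2 ++ W3] [:: a, b & w]) =
    (a \in X0) * ((b \in X1) * (npath a W1 b * npath a W2 b * npath a W3 b)).
  rewrite -count_parallel_paths -!count_tuples_andl; apply: eq_count_tuples => w _.
  by rewrite /theta_coloured /from_lists /= sizeW1 sizeW2 -!andbA.
rewrite /=; under eq_bigr do under eq_bigr do rewrite count_ab.
rewrite [RHS]big_mkcond; apply: eq_bigr => a _; rewrite -big_distrr /=.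
case: (a \in X0); rewrite ?mul1n ?mul0n // [RHS]big_mkcond; apply: eq_bigr => b _.
by case: (b \in X1); rewrite ?mul1n.
Qed.

End ThetaColourings.

(** * The graphs Theta(2,2,l) *)

Lemma P_chrom_P_list (V : finType) (adj : rel V) m :
  P_chrom adj m = P_list adj (fun _ => [set: 'I_m]).
Proof.
apply: eq_card => f; rewrite !inE (_ : [forall w, _] = true) //.
by apply/forallP => w; rewrite inE.
Qed.

Section Theta22.
Variable l : nat.
Local Notation u := (theta_u 2 2 l isT isT).
Local Notation v := (theta_v 2 2 l isT isT).

Lemma size_drop4_codom (T : Type) (F : theta_vertex 2 2 l -> T) :
  0 < l -> (size (drop 4 (codom F))).+1 = l.
Proof. by rewrite size_drop size_codom card_ord; lia. Qed.

Lemma codom_theta22 (T : Type) (x0 : T) (F : theta_vertex 2 2 l -> T) : 0 < l ->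
  codom F = [:: F u, F v, nth x0 (codom F) 2, nth x0 (codom F) 3 & drop 4 (codom F)].
Proof.
move=> l_gt0; have size_F : size (codom F) = l + 3 by rewrite size_codom card_ord; lia.
rewrite -[LHS]drop0 !(drop_nth x0 (n := 0), drop_nth x0 (n := 1), drop_nth x0 (n := 2),
  drop_nth x0 (n := 3)) ?size_F //; try lia.
by rewrite (nth_codom_ord x0 F u) (nth_codom_ord x0 F v).
Qed.

Lemma P_list_theta22 (C : finType) (L : theta_vertex 2 2 l -> {set C}) : 0 < l ->
  P_list (theta_adj 2 2 l) L = \sum_(a in L u) \sum_(b in L v)
    npath a [:: nth set0 (codom L) 2] b * npath a [:: nth set0 (codom L) 3] b *
    npath a (drop 4 (codom L)) b.
Proof. by move=> l_gt0; apply: P_list_theta; rewrite -?codom_theta22. Qed.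

Lemma P_chrom_theta22 m : 1 < m -> 0 < l -> ~~ odd l ->
  P_chrom (theta_adj 2 2 l) m =
  (m - 2) ^ 2 * (m * (m - 1) ^ l) + (2 * m - 3) * ((m - 1) ^ l + (m - 1)).
Proof.
move=> m_gt1 l_gt0 even_l; set T := [set: 'I_m].
have cardT : #|T| = m by rewrite cardsT card_ord.
have codomT : all (pred1 T) (codom (fun _ : theta_vertex 2 2 l => T)).
  by apply/allP => X /codomP[_ ->]; rewrite /= eqxx.
have nthT i : i < 4 -> nth set0 (codom (fun _ : theta_vertex 2 2 l => T)) i = T.
  move=> i_lt4; apply/eqP; apply: (allP codomT); apply: mem_nth.
  by rewrite size_codom card_ord; lia.
rewrite P_chrom_P_list P_list_theta22 // !nthT // (theta_const_wsum m_gt1) //.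
rewrite (wsum_const m_gt1) ?size_drop4_codom //.
  by apply/allP => X /mem_drop; apply: (allP codomT).
by rewrite -(size_drop4_codom (fun _ => T)) //= negbK in even_l.
Qed.

Lemma P_list_theta22_ge (C : finType) m (L : theta_vertex 2 2 l -> {set C}) :
  2 < m -> 2 < l -> ~~ odd l -> (forall w, #|L w| = m) -> L u = L v ->
  (m - 2) ^ 2 * (m * (m - 1) ^ l) + (2 * m - 3) * ((m - 1) ^ l + (m - 1)) <=
  P_list (theta_adj 2 2 l) L.
Proof.
move=> m_gt2 l_gt2 even_l cardL eqLuv; have l_gt0 : 0 < l by lia.
have sizedL : all (fun X : {set C} => #|X| == m) (codom L).
  by apply/allP => X /codomP[x ->]; rewrite cardL.
have cardL_nth i : i < 4 -> #|nth set0 (codom L) i| = m.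
  move=> i_lt4; apply/eqP; apply: (allP sizedL); apply: mem_nth.
  by rewrite size_codom card_ord; lia.
rewrite P_list_theta22 // -eqLuv.
apply: leq_trans (wsum_le_theta (ltnW m_gt2) _ _ (cardL_nth 2 isT) (cardL_nth 3 isT)).
rewrite -[X in (m - 1) ^ X](size_drop4_codom L l_gt0); apply: wsum_ge => //.
- by apply/allP => X /mem_drop; apply: (allP sizedL).
- by rewrite -(size_drop4_codom L l_gt0) /= negbK in even_l.
- by rewrite -ltnS size_drop4_codom.
Qed.

End Theta22.

Theorem lemma18 (k m : nat) (C : finType)
  (L : theta_vertex 2 2 (2 * k) -> {set C}) :
  2 <= k -> 3 <= m ->
  (forall w, #|L w| = m) ->
  L (theta_u 2 2 (2 * k) isT isT) = L (theta_v 2 2 (2 * k) isT isT) ->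
  P_chrom (theta_adj 2 2 (2 * k)) m <= P_list (theta_adj 2 2 (2 * k)) L.
Proof.
move=> k_ge2 m_ge3 cardL eqLuv.
have even_l : ~~ odd (2 * k) by rewrite oddM.
rewrite P_chrom_theta22 ?(ltnW m_ge3) //; last lia.
apply: P_list_theta22_ge => //; lia.
Qed.
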